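(* A Markov category $\mathcal C$ is positive if and only if for every object $X$ the copy morphism $\mathrm{copy}_X$ is an initial dilation of $\mathrm{id}_X$ and the class of deterministic morphisms of $\mathcal C$ coincides with the class of non-creative morphisms of $\mathcal C$.
   Context: A Markov category is a symmetric monoidal category $(\mathcal C,\otimes,I)$ with commutative comonoids $\mathrm{copy}_X\colon X\to X\otimes X$, $\mathrm{del}_X\colon X\to I$ compatible with $\otimes$, with $I$ terminal. $f\colon A\to X$ is deterministic if $\mathrm{copy}_X\circ f=(f\otimes f)\circ\mathrm{copy}_A$. $\mathcal C$ is positive if for all $f\colon X\to Y$, $g\colon Y\to Z$ with $g\circ f$ deterministic, $(\mathrm{id}_Y\otimes g)\circ\mathrm{copy}_Y\circ f=(f\otimes (g\circ f))\circ\mathrm{copy}_X$. A dilation of $p\colon A\to X$ is $\pi\colon A\to X\otimes E$ with $(\mathrm{id}_X\otimes\mathrm{del}_E)\circ\pi=p$. For a dilation $\pi\colon A\to X\otimes E$ and $f_1,f_2\colon E\to E'$, these are $\pi$-dilationally equal if for every dilation $\rho\colon A\to X\otimes E\otimes F$ of $\pi$, $(\mathrm{id}_X\otimes f_1\otimes\mathrm{id}_F)\circ\rho=(\mathrm{id}_X\otimes f_2\otimes\mathrm{id}_F)\circ\rho$. A dilation $\pi\colon A\to X\otimes E$ of $p$ is initial if for every dilation $\pi'\colon A\to X\otimes E'$ of $p$ there is $f\colon E\to E'$ with $(\mathrm{id}_X\otimes f)\circ\pi=\pi'$, unique up to $\pi$-dilational equality. A morphism $p\colon A\to X$ is non-creative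 if every dilation $\pi\colon A\to X\otimes E$ of $p$ equals $(p\otimes\mathrm{id}_E)\circ\iota$ for some dilation $\iota\colon A\to A\otimes E$ of $\mathrm{id}_A$. *)

Set Implicit Arguments.
Unset Strict Implicit.

Record MarkovCategory := {
  ob : Type;
  hom : ob -> ob -> Type;
  idm : forall (A : ob), hom A A;
  comp : forall (A B C : ob), hom B C -> hom A B -> hom A C;
  comp_idl : forall A B (f : hom A B), comp (idm B) f = f;
  comp_idr : forall A B (f : hom A B), comp f (idm A) = f;
  comp_assoc : forall A B C D (f : hom A B) (g : hom B C) (h : hom C D),
      comp h (comp g f) = comp (comp h g) f;
  tens : ob -> ob -> ob;
  tensm : forall A B C D, hom A B -> hom C D -> hom (tens A C) (tens B D);
  tens_id : forall A B, tensm (idm A) (idm B) = idm (tens A B);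
  tens_comp : forall A B C A' B' C' (f : hom A B) (g : hom B C)
      (f' : hom A' B') (g' : hom B' C'),
      tensm (comp g f) (comp g' f') = comp (tensm g g') (tensm f f');
  unit : ob;
  assoc : forall A B C, hom (tens (tens A B) C) (tens A (tens B C));
  assoc_inv : forall A B C, hom (tens A (tens B C)) (tens (tens A B) C);
  assoc_iso1 : forall A B C, comp (assoc_inv A B C) (assoc A B C) = idm _;
  assoc_iso2 : forall A B C, comp (assoc A B C) (assoc_inv A B C) = idm _;
  assoc_nat : forall A A' B B' C C' (f : hom A A') (g : hom B B') (h : hom C C'),
      comp (assoc A' B' C') (tensm (tensm f g) h)
      = comp (tensm f (tensm g h)) (assoc A B C);
  lunit : forall A, hom (tens unit A) A;
  lunit_inv : forall A, hom A (tens unit A);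
  lunit_iso1 : forall A, comp (lunit_inv A) (lunit A) = idm _;
  lunit_iso2 : forall A, comp (lunit A) (lunit_inv A) = idm _;
  lunit_nat : forall A B (f : hom A B),
      comp (lunit B) (tensm (idm unit) f) = comp f (lunit A);
  runit : forall A, hom (tens A unit) A;
  runit_inv : forall A, hom A (tens A unit);
  runit_iso1 : forall A, comp (runit_inv A) (runit A) = idm _;
  runit_iso2 : forall A, comp (runit A) (runit_inv A) = idm _;
  runit_nat : forall A B (f : hom A B),
      comp (runit B) (tensm f (idm unit)) = comp f (runit A);
  pentagon : forall A B C D,
      comp (assoc A B (tens C D)) (assoc (tens A B) C D)
      = comp (tensm (idm A) (assoc B C D))
             (comp (assoc A (tens B C) D) (tensm (assoc A B C) (idm D)));
  triangle : forall A B,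
      comp (tensm (idm A) (lunit B)) (assoc A unit B)
      = tensm (runit A) (idm B);
  swap : forall A B, hom (tens A B) (tens B A);
  swap_nat : forall A A' B B' (f : hom A A') (g : hom B B'),
      comp (swap A' B') (tensm f g) = comp (tensm g f) (swap A B);
  swap_invol : forall A B, comp (swap B A) (swap A B) = idm _;
  hexagon : forall A B C,
      comp (assoc B C A) (comp (swap A (tens B C)) (assoc A B C))
      = comp (tensm (idm B) (swap A C))
             (comp (assoc B A C) (tensm (swap A B) (idm C)));
  copy : forall A, hom A (tens A A);
  del : forall A, hom A unit;
  counit_l : forall A,
      comp (lunit A) (comp (tensm (del A) (idm A)) (copy A)) = idm A;
  counit_r : forall A,
      comp (runit A) (comp (tensm (idm A) (del A)) (copy A)) = idm A;
  coassoc : forall A,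
      comp (assoc A A A) (comp (tensm (copy A) (idm A)) (copy A))
      = comp (tensm (idm A) (copy A)) (copy A);
  cocomm : forall A, comp (swap A A) (copy A) = copy A;
  del_tens : forall A B,
      del (tens A B) = comp (lunit unit) (tensm (del A) (del B));
  copy_tens : forall A B,
      copy (tens A B)
      = comp (assoc_inv A B (tens A B))
         (comp (tensm (idm A) (assoc B A B))
          (comp (tensm (idm A) (tensm (swap A B) (idm B)))
           (comp (tensm (idm A) (assoc_inv A B B))
            (comp (assoc A A (tens B B))
                  (tensm (copy A) (copy B))))));
  copy_unit : copy unit = lunit_inv unit;
  unit_terminal : forall A (f : hom A unit), f = del A
}.

Arguments idm {m} A.
Arguments comp {m A B C} g f.
Arguments tensm {m A B C D} f g.
Arguments tens {m} A B.
Arguments unit {m}.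
Arguments assoc {m} A B C.
Arguments assoc_inv {m} A B C.
Arguments lunit {m} A.
Arguments lunit_inv {m} A.
Arguments runit {m} A.
Arguments runit_inv {m} A.
Arguments swap {m} A B.
Arguments copy {m} A.
Arguments del {m} A.

Section Notions.
Variable C : MarkovCategory.

Definition deterministic (A X : ob C) (f : hom A X) : Prop :=
  comp (copy X) f = comp (tensm f f) (copy A).

Definition positive : Prop :=
  forall (X Y Z : ob C) (f : hom X Y) (g : hom Y Z),
    deterministic (comp g f) ->
    comp (tensm (idm Y) g) (comp (copy Y) f)
    = comp (tensm f (comp g f)) (copy X).

Definition dilation (A X E : ob C) (p : hom A X) (pi : hom A (tens X E)) : Prop :=
  comp (runit X) (comp (tensm (idm X) (del E)) pi) = p.

Definition dilationally_equal (A X E E' : ob C) (pi : hom A (tens X E))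
    (f1 f2 : hom E E') : Prop :=
  forall (F : ob C) (rho : hom A (tens (tens X E) F)),
    dilation pi rho ->
    comp (tensm (tensm (idm X) f1) (idm F)) rho
    = comp (tensm (tensm (idm X) f2) (idm F)) rho.

Definition initial_dilation (A X E : ob C) (p : hom A X) (pi : hom A (tens X E))
    : Prop :=
  dilation p pi /\
  forall (E' : ob C) (pi' : hom A (tens X E')),
    dilation p pi' ->
    (exists f : hom E E', comp (tensm (idm X) f) pi = pi') /\
    (forall f1 f2 : hom E E',
        comp (tensm (idm X) f1) pi = pi' ->
        comp (tensm (idm X) f2) pi = pi' ->
        dilationally_equal pi f1 f2).

Definition non_creative (A X : ob C) (p : hom A X) : Prop :=
  forall (E : ob C) (pi : hom A (tens X E)),
    dilation p pi ->
    exists iota : hom A (tens A E),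
      dilation (idm A) iota /\ pi = comp (tensm p (idm E)) iota.

End Notions.

(* Writing marg1, marg2 for the two marginals of a joint A -> X (x) E, the
   coherence axiom for copying a tensor product makes (marg2 (x) marg1) . copy
   the symmetry.  Feeding a joint pi and its first marginal to positivity thus
   shows that a joint whose first marginal is deterministic is the product of
   its marginals.  Hence every dilation of id_X is (id (x) h) . copy_X (the
   existence half of the initiality of copy_X), every dilation of copy_X is
   (copy_X (x) k) . copy_X (the uniqueness half), a dilation of a
   deterministic p is (p (x) id) applied to such a dilation of the identity,
   and the dilation copy . p of a non-creative p forces p to be deterministic.
   Conversely, if g . f is deterministic, then the dilation
   (g (x) id) . copy . f of g . f factors through a dilation of id_X, which by
   initiality is (id (x) h) . copy_X; comparing marginals gives h = f, which is
   positivity up to the symmetry. *)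


Section MarkovCategoryFacts.
Variable M : MarkovCategory.

Local Notation "g ∘ f" := (comp g f) (at level 41, right associativity).
Local Notation "f ⊗ g" := (tensm f g) (at level 38, left associativity).
Local Notation I := (@unit M).

Ltac assoc_r := repeat rewrite <- comp_assoc.

Lemma comp_eq_prefix2 {A B D : ob M} {a : hom B D} {b : hom A B} {c : hom A D} :
  a ∘ b = c -> forall (E : ob M) (r : hom E A), a ∘ (b ∘ r) = c ∘ r.
Proof. intros H E r. rewrite comp_assoc, H. reflexivity. Qed.

Lemma comp_eq_prefix3 {A B D K : ob M} {a : hom D K} {b : hom B D} {c : hom A B}
    {d : hom A K} :
  a ∘ (b ∘ c) = d -> forall (E : ob M) (r : hom E A), a ∘ (b ∘ (c ∘ r)) = d ∘ r.
Proof. intros H E r. rewrite (comp_assoc r c b), (comp_assoc _ _ a), H. reflexivity. Qed.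

Lemma comp_eq_prefix4 {A B D K L : ob M} {a : hom K L} {b : hom D K} {c : hom B D}
    {d : hom A B} {e : hom A L} :
  a ∘ (b ∘ (c ∘ d)) = e -> forall (E : ob M) (r : hom E A),
  a ∘ (b ∘ (c ∘ (d ∘ r))) = e ∘ r.
Proof. intros H E r. rewrite (comp_assoc r d c), (comp_eq_prefix3 H). reflexivity. Qed.

(* Rewrites with an equation whose left side, a chain of up to four morphisms,
   occurs anywhere inside a right-associated chain. *)
Ltac rw_comp L :=
  let H := fresh in
  pose proof L as H; repeat rewrite <- comp_assoc in H;
  first [ rewrite H | rewrite (comp_eq_prefix2 H) | rewrite (comp_eq_prefix3 H)
        | rewrite (comp_eq_prefix4 H) ];
  clear H; assoc_r.
Ltac rw_comp_rev L := rw_comp (eq_sym L).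

Lemma comp_tensm {A B D A' B' D' : ob M} (f : hom A B) (g : hom B D)
    (f' : hom A' B') (g' : hom B' D') :
  (g ⊗ g') ∘ (f ⊗ f') = (g ∘ f) ⊗ (g' ∘ f').
Proof. symmetry. apply tens_comp. Qed.

Lemma tensm_id_comp_l {A B D E : ob M} (f : hom A B) (g : hom B D) :
  (g ∘ f) ⊗ idm E = (g ⊗ idm E) ∘ (f ⊗ idm E).
Proof. rewrite comp_tensm, comp_idl. reflexivity. Qed.

Lemma tensm_id_comp_r {A B D E : ob M} (f : hom A B) (g : hom B D) :
  idm E ⊗ (g ∘ f) = (idm E ⊗ g) ∘ (idm E ⊗ f).
Proof. rewrite comp_tensm, comp_idl. reflexivity. Qed.

Lemma tensm_factor_l {A B D E : ob M} (f : hom A B) (g : hom D E) :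
  f ⊗ g = (idm B ⊗ g) ∘ (f ⊗ idm D).
Proof. rewrite comp_tensm, comp_idl, comp_idr. reflexivity. Qed.

Lemma tensm_factor_r {A B D E : ob M} (f : hom A B) (g : hom D E) :
  f ⊗ g = (f ⊗ idm E) ∘ (idm A ⊗ g).
Proof. rewrite comp_tensm, comp_idl, comp_idr. reflexivity. Qed.

Lemma tensm_comm_l {A B B' D A' D' : ob M} (f : hom A' D') {h : hom A B} {k : hom B D}
    {k0 : hom A B'} {h' : hom B' D} :
  k ∘ h = h' ∘ k0 -> (k ⊗ idm D') ∘ (h ⊗ f) = (h' ⊗ f) ∘ (k0 ⊗ idm A').
Proof. intros H. rewrite !comp_tensm, comp_idl, comp_idr, H. reflexivity. Qed.

Lemma tensm_comm_r {A B B' D A' D' : ob M} (f : hom A' D') {h : hom A B} {k : hom B D}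
    {k0 : hom A B'} {h' : hom B' D} :
  k ∘ h = h' ∘ k0 -> (idm D' ⊗ k) ∘ (f ⊗ h) = (f ⊗ h') ∘ (idm A' ⊗ k0).
Proof. intros H. rewrite !comp_tensm, comp_idl, comp_idr, H. reflexivity. Qed.

Lemma split_mono_cancel {A B D : ob M} (j : hom B D) (i : hom D B) :
  i ∘ j = idm B -> forall f g : hom A B, j ∘ f = j ∘ g -> f = g.
Proof.
  intros H f g E. rewrite <- (comp_idl f), <- (comp_idl g), <- H.
  rewrite <- !comp_assoc, E. reflexivity.
Qed.

Lemma split_epi_cancel {A B D : ob M} (j : hom A B) (i : hom B A) :
  j ∘ i = idm B -> forall f g : hom B D, f ∘ j = g ∘ j -> f = g.
Proof.
  intros H f g E. rewrite <- (comp_idr f), <- (comp_idr g), <- H.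
  rewrite !comp_assoc, E. reflexivity.
Qed.

Lemma assoc_inv_nat {A A' B B' D D' : ob M} (f : hom A A') (g : hom B B') (h : hom D D') :
  assoc_inv A' B' D' ∘ (f ⊗ (g ⊗ h)) = ((f ⊗ g) ⊗ h) ∘ assoc_inv A B D.
Proof.
  apply (split_epi_cancel _ _ (assoc_iso2 A B D)). assoc_r.
  rw_comp (assoc_iso1 A B D). rewrite comp_idr.
  rw_comp_rev (assoc_nat f g h).
  rw_comp (assoc_iso1 A' B' D'). rewrite comp_idl. reflexivity.
Qed.

(* Kelly's redundant unit axioms: tensoring with I is injective on morphisms
   (by naturality of the unitors), and after tensoring with I both sides are
   related by the pentagon and triangle axioms. *)
Lemma runit_assoc (X Y : ob M) : (idm X ⊗ runit Y) ∘ assoc X Y I = runit (tens X Y).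
Proof.
  apply (split_epi_cancel _ _ (runit_iso2 (tens (tens X Y) I))).
  rewrite <- runit_nat, <- runit_nat. f_equal.
  apply (split_mono_cancel _ _ (assoc_iso1 X Y I)).
  rewrite <- (triangle (tens X Y) I), <- (tens_id X Y).
  rewrite comp_assoc, assoc_nat. assoc_r. rewrite pentagon.
  rewrite comp_assoc, comp_tensm, triangle, comp_idl.
  rewrite comp_assoc, <- assoc_nat. assoc_r.
  rewrite comp_tensm, comp_idl. reflexivity.
Qed.

Lemma lunit_assoc (X Y : ob M) : lunit (tens X Y) ∘ assoc I X Y = lunit X ⊗ idm Y.
Proof.
  apply (split_epi_cancel _ _ (lunit_iso2 (tens (tens I X) Y))).
  rewrite <- lunit_nat, <- lunit_nat. f_equal.
  assert (Hiso : ((assoc I (tens I X) Y ∘ (assoc I I X ⊗ idm Y)) ∘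
                 ((assoc_inv I I X ⊗ idm Y) ∘ assoc_inv I (tens I X) Y)) = idm _).
  { assoc_r. rw_comp (comp_tensm (assoc_inv I I X) (assoc I I X) (idm Y) (idm Y)).
    rewrite assoc_iso2, comp_idl, tens_id, comp_idl, assoc_iso2. reflexivity. }
  apply (split_epi_cancel _ _ Hiso). assoc_r.
  rewrite tensm_id_comp_r. assoc_r.
  rw_comp_rev (pentagon I I X Y).
  rw_comp (triangle I (tens X Y)).
  rewrite <- (tens_id X Y).
  rw_comp_rev (assoc_nat (runit I) (idm X) (idm Y)).
  rewrite <- (triangle I X).
  rewrite tensm_id_comp_l. assoc_r.
  rw_comp (assoc_nat (idm I) (lunit X) (idm Y)). reflexivity.
Qed.

Lemma lunit_assoc_inv (X Y : ob M) :
  (lunit X ⊗ idm Y) ∘ assoc_inv I X Y = lunit (tens X Y).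
Proof. rewrite <- lunit_assoc. assoc_r. rewrite assoc_iso2, comp_idr. reflexivity. Qed.

Lemma runit_assoc_inv (X Y : ob M) :
  runit (tens X Y) ∘ assoc_inv X Y I = idm X ⊗ runit Y.
Proof. rewrite <- runit_assoc. assoc_r. rewrite assoc_iso2, comp_idr. reflexivity. Qed.

Definition interchange (A A' B B' : ob M) :
    hom (tens (tens A A') (tens B B')) (tens (tens A B) (tens A' B')) :=
  assoc_inv A B (tens A' B') ∘ (idm A ⊗ assoc B A' B') ∘ (idm A ⊗ (swap A' B ⊗ idm B'))
  ∘ (idm A ⊗ assoc_inv A' B B') ∘ assoc A A' (tens B B').

Lemma copy_tensE (A B : ob M) : copy (tens A B) = interchange A A B B ∘ (copy A ⊗ copy B).
Proof. rewrite copy_tens. unfold interchange. assoc_r. reflexivity. Qed.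

Lemma interchange_nat {A A' B B' A2 A2' B2 B2' : ob M}
    (f : hom A A2) (f' : hom A' A2') (g : hom B B2) (g' : hom B' B2') :
  interchange A2 A2' B2 B2' ∘ ((f ⊗ f') ⊗ (g ⊗ g'))
  = ((f ⊗ g) ⊗ (f' ⊗ g')) ∘ interchange A A' B B'.
Proof.
  unfold interchange. assoc_r.
  rw_comp (assoc_nat f f' (g ⊗ g')).
  rw_comp (tensm_comm_r f (assoc_inv_nat f' g g')).
  rw_comp (tensm_comm_r f (tensm_comm_l g' (swap_nat f' g))).
  rw_comp (tensm_comm_r f (assoc_nat g f' g')).
  rw_comp (assoc_inv_nat f g (f' ⊗ g')). reflexivity.
Qed.

Lemma interchange_unit (A B : ob M) :
  (lunit B ⊗ runit A) ∘ interchange I A B I = swap A B ∘ (lunit A ⊗ runit B).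
Proof.
  assert (Hmid : (idm I ⊗ (idm B ⊗ runit A)) ∘ (idm I ⊗ assoc B A I)
                 ∘ (idm I ⊗ (swap A B ⊗ idm I)) ∘ (idm I ⊗ assoc_inv A B I)
                 = (idm I ⊗ swap A B) ∘ (idm I ⊗ (idm A ⊗ runit B))).
  { rewrite <- !tensm_id_comp_r. f_equal.
    rw_comp (runit_assoc B A). rw_comp (runit_nat (swap A B)).
    rewrite runit_assoc_inv. reflexivity. }
  unfold interchange. rewrite (tensm_factor_l (lunit B) (runit A)). assoc_r.
  rw_comp (lunit_assoc_inv B (tens A I)).
  rw_comp_rev (lunit_nat (idm B ⊗ runit A)).
  rw_comp Hmid.
  rw_comp (lunit_nat (swap A B)). rw_comp (lunit_nat (idm A ⊗ runit B)).
  rw_comp (lunit_assoc A (tens B I)).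
  rewrite <- tensm_factor_l. reflexivity.
Qed.

Definition marg1 (X E : ob M) : hom (tens X E) X := runit X ∘ (idm X ⊗ del E).
Definition marg2 (X E : ob M) : hom (tens X E) E := lunit E ∘ (del X ⊗ idm E).

Lemma dilationE {A X E : ob M} (p : hom A X) (pi : hom A (tens X E)) :
  dilation p pi <-> marg1 X E ∘ pi = p.
Proof. unfold dilation, marg1. assoc_r. apply iff_refl. Qed.

Lemma marg1_copy (X : ob M) : marg1 X X ∘ copy X = idm X.
Proof. unfold marg1. assoc_r. apply counit_r. Qed.

Lemma marg2_copy (X : ob M) : marg2 X X ∘ copy X = idm X.
Proof. unfold marg2. assoc_r. apply counit_l. Qed.

Lemma marg1_tensm {X Y E E' : ob M} (f : hom X Y) (g : hom E E') :
  marg1 Y E' ∘ (f ⊗ g) = f ∘ marg1 X E.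
Proof.
  unfold marg1. assoc_r. rewrite comp_tensm, comp_idl, (unit_terminal (del E' ∘ g)).
  rewrite (tensm_factor_r f (del E)). rw_comp (runit_nat f). reflexivity.
Qed.

Lemma marg2_tensm {X Y E E' : ob M} (f : hom X Y) (g : hom E E') :
  marg2 Y E' ∘ (f ⊗ g) = g ∘ marg2 X E.
Proof.
  unfold marg2. assoc_r. rewrite comp_tensm, comp_idl, (unit_terminal (del Y ∘ f)).
  rewrite (tensm_factor_l (del X) g). rw_comp (lunit_nat g). reflexivity.
Qed.

Lemma marg1_tensm_copy {A X Y : ob M} (f : hom A X) (g : hom A Y) :
  marg1 X Y ∘ (f ⊗ g) ∘ copy A = f.
Proof. rw_comp (marg1_tensm f g). rewrite marg1_copy, comp_idr. reflexivity. Qed.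

Lemma marg2_tensm_copy {A X Y : ob M} (f : hom A X) (g : hom A Y) :
  marg2 X Y ∘ (f ⊗ g) ∘ copy A = g.
Proof. rw_comp (marg2_tensm f g). rewrite marg2_copy, comp_idr. reflexivity. Qed.

Lemma swap_tensm_copy {A X Y : ob M} (f : hom A X) (g : hom A Y) :
  swap X Y ∘ (f ⊗ g) ∘ copy A = (g ⊗ f) ∘ copy A.
Proof. rw_comp (swap_nat f g). rewrite cocomm. reflexivity. Qed.

Lemma marg_swap_copy (A B : ob M) :
  (marg2 A B ⊗ marg1 A B) ∘ copy (tens A B) = swap A B.
Proof.
  rewrite copy_tensE. unfold marg1, marg2.
  rewrite <- comp_tensm. assoc_r.
  rw_comp_rev (interchange_nat (del A) (idm A) (idm B) (del B)).
  rw_comp (interchange_unit A B).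
  rewrite !comp_tensm, counit_l, counit_r, tens_id, comp_idr. reflexivity.
Qed.

Lemma assoc_marg1 (X Y F : ob M) :
  (idm X ⊗ marg1 Y F) ∘ assoc X Y F = marg1 (tens X Y) F.
Proof.
  unfold marg1. rewrite tensm_id_comp_r. assoc_r.
  rw_comp_rev (assoc_nat (idm X) (idm Y) (del F)).
  rw_comp (runit_assoc X Y). rewrite tens_id. reflexivity.
Qed.

Lemma deterministic_id (X : ob M) : deterministic (idm X).
Proof. unfold deterministic. rewrite comp_idr, tens_id, comp_idl. reflexivity. Qed.

Lemma copy_coassoc_tensm (X F : ob M) (k : hom X F) :
  assoc_inv X X F ∘ (idm X ⊗ ((idm X ⊗ k) ∘ copy X)) ∘ copy X = (copy X ⊗ k) ∘ copy X.
Proof.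
  rewrite tensm_id_comp_r. assoc_r.
  rw_comp_rev (coassoc X).
  rw_comp (assoc_inv_nat (idm X) (idm X) k).
  rw_comp (assoc_iso1 X X X).
  rewrite comp_idl, tens_id. rw_comp (comp_tensm (copy X) (idm (tens X X)) (idm X) k).
  rewrite comp_idl, comp_idr. reflexivity.
Qed.

Section Positive.
Hypothesis positive_M : positive M.

Lemma det_marg1_split {A X E : ob M} (pi : hom A (tens X E)) :
  deterministic (marg1 X E ∘ pi) -> pi = ((marg1 X E ∘ pi) ⊗ (marg2 X E ∘ pi)) ∘ copy A.
Proof.
  intros Hdet.
  assert (Hswap : swap X E ∘ pi = ((marg2 X E ∘ pi) ⊗ (marg1 X E ∘ pi)) ∘ copy A).
  { rewrite <- (marg_swap_copy X E), (tensm_factor_r (marg2 X E) (marg1 X E)). assoc_r.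
    rewrite (positive_M _ _ _ pi (marg1 X E) Hdet).
    rw_comp (comp_tensm pi (marg2 X E) (marg1 X E ∘ pi) (idm X)).
    rewrite comp_idl. reflexivity. }
  transitivity (swap E X ∘ swap X E ∘ pi).
  { rewrite comp_assoc, swap_invol, comp_idl. reflexivity. }
  rewrite Hswap. apply swap_tensm_copy.
Qed.

Lemma dilation_id_eq {X E : ob M} (pi : hom X (tens X E)) :
  dilation (idm X) pi -> pi = (idm X ⊗ (marg2 X E ∘ pi)) ∘ copy X.
Proof.
  intros Hpi. apply dilationE in Hpi.
  pose proof (det_marg1_split pi) as Hsplit. rewrite Hpi in Hsplit.
  exact (Hsplit (deterministic_id X)).
Qed.

Lemma dilation_copy_eq {X F : ob M} (rho : hom X (tens (tens X X) F)) :
  dilation (copy X) rho -> exists k : hom X F, rho = (copy X ⊗ k) ∘ copy X.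
Proof.
  intros Hrho. apply dilationE in Hrho.
  (* [tau] is a dilation of id_X whose second component is again one. *)
  set (tau := assoc X X F ∘ rho).
  assert (Htau : (idm X ⊗ marg1 X F) ∘ tau = copy X).
  { unfold tau. rw_comp (assoc_marg1 X X F). exact Hrho. }
  assert (Etau : tau = (idm X ⊗ (marg2 X (tens X F) ∘ tau)) ∘ copy X).
  { apply dilation_id_eq, dilationE.
    rewrite <- (comp_idl (marg1 X (tens X F))), <- (marg1_tensm (idm X) (marg1 X F)).
    assoc_r. rewrite Htau. apply marg1_copy. }
  set (h := marg2 X (tens X F) ∘ tau) in Etau.
  assert (Eh : h = (idm X ⊗ (marg2 X F ∘ h)) ∘ copy X).
  { apply dilation_id_eq, dilationE. unfold h.
    rw_comp_rev (marg2_tensm (idm X) (marg1 X F)). rewrite Htau. apply marg2_copy. }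
  set (k := marg2 X F ∘ h) in Eh.
  exists k.
  transitivity (assoc_inv X X F ∘ tau).
  { unfold tau. rewrite comp_assoc, assoc_iso1, comp_idl. reflexivity. }
  rewrite Etau, Eh. assoc_r. apply copy_coassoc_tensm.
Qed.

Lemma positive_copy_initial (X : ob M) : initial_dilation (idm X) (copy X).
Proof.
  split; [apply dilationE, marg1_copy |].
  intros E' pi' Hpi'. split.
  - exists (marg2 X E' ∘ pi'). symmetry. apply dilation_id_eq, Hpi'.
  - intros f1 f2 H1 H2 F rho Hrho.
    destruct (dilation_copy_eq rho Hrho) as [k ->].
    rewrite !comp_assoc, !comp_tensm, !comp_idl, H1, H2. reflexivity.
Qed.

Lemma positive_det_non_creative {A X : ob M} (p : hom A X) :
  deterministic p -> non_creative p.
Proof.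
  intros Hdet E pi Hpi. apply dilationE in Hpi.
  pose proof (det_marg1_split pi) as Hsplit. rewrite Hpi in Hsplit.
  exists ((idm A ⊗ (marg2 X E ∘ pi)) ∘ copy A). split.
  - apply dilationE, marg1_tensm_copy.
  - rewrite comp_assoc, comp_tensm, comp_idl, comp_idr. exact (Hsplit Hdet).
Qed.

Lemma positive_non_creative_det {A X : ob M} (p : hom A X) :
  non_creative p -> deterministic p.
Proof.
  intros Hnc.
  destruct (Hnc X (copy X ∘ p)) as [iota [Hiota Hcopy]].
  { apply dilationE. rw_comp (marg1_copy X). apply comp_idl. }
  rewrite (dilation_id_eq iota Hiota) in Hcopy.
  set (h := marg2 A X ∘ iota) in Hcopy.
  rewrite comp_assoc, comp_tensm, comp_idl, comp_idr in Hcopy.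
  assert (Hh : h = p).
  { transitivity (marg2 X X ∘ (p ⊗ h) ∘ copy A); [symmetry; apply marg2_tensm_copy |].
    rewrite <- Hcopy. rw_comp (marg2_copy X). apply comp_idl. }
  unfold deterministic. rewrite Hcopy, Hh. reflexivity.
Qed.

End Positive.

Lemma positive_of_copy_initial_non_creative
    (Hinit : forall X : ob M, initial_dilation (idm X) (copy X))
    (Hdet : forall (A X : ob M) (p : hom A X), deterministic p -> non_creative p) :
  positive M.
Proof.
  intros X Y Z f g Hgf.
  destruct (Hdet _ _ _ Hgf Y ((g ⊗ idm Y) ∘ copy Y ∘ f)) as [iota [Hiota Hpi]].
  { apply dilationE. rw_comp (marg1_tensm_copy g (idm Y)). reflexivity. }
  destruct (proj2 (Hinit X) Y iota Hiota) as [[h <-] _].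
  rewrite (comp_eq_prefix2 (comp_tensm (idm X) (g ∘ f) h (idm Y))), comp_idr, comp_idl
    in Hpi.
  assert (Hh : h = f).
  { transitivity (marg2 Z Y ∘ ((g ∘ f) ⊗ h) ∘ copy X); [symmetry; apply marg2_tensm_copy |].
    rewrite <- Hpi. rw_comp (marg2_tensm_copy g (idm Y)). apply comp_idl. }
  rewrite Hh in Hpi.
  rewrite <- (swap_tensm_copy (g ∘ f) f), <- Hpi.
  rw_comp (swap_tensm_copy g (idm Y)). reflexivity.
Qed.

End MarkovCategoryFacts.

Theorem corollary4p16 (C : MarkovCategory) :
  positive C <->
  ((forall X : ob C, initial_dilation (idm X) (copy X)) /\
   (forall (A X : ob C) (p : hom A X), deterministic p <-> non_creative p)).
Proof.
  split.
  - intros Hpos. split.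
    + exact (positive_copy_initial C Hpos).
    + intros A X p. split.
      * exact (positive_det_non_creative C Hpos p).
      * exact (positive_non_creative_det C Hpos p).
  - intros [Hinit Hdet]. apply (positive_of_copy_initial_non_creative C Hinit).
    intros A X p. apply Hdet.
Qed.
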